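(* Let $\widetilde C$ be an $\mathcal S$-complex over $R$ and $n\in\mathbb Z$. Then the dual of the $\mathcal S$-complex $\Sigma^n\widetilde C$ is isomorphic to $\Sigma^{-n}\widetilde C^\dagger$.
   Context: Let $R$ be a commutative ring; graded modules are $\mathbb Z$-graded, $V[i]_j=V_{i+j}$, differentials have degree $-1$, and $\epsilon$ is the sign map ($(-1)^i$ on degree $i$). An $\mathcal S$-complex over $R$ is a chain complex $(\widetilde C,\widetilde d)$ of finitely generated free graded $R$-modules with a graded decomposition $\widetilde C=C\oplus C[-1]\oplus\mathsf R$ in which $\widetilde d=\begin{pmatrix} d&0&0\\ v&-d&\delta_2\\ \delta_1&0&r\end{pmatrix}$; $\chi$ is the degree $1$ map sending $C$ identically onto $C[-1]$ and zero on $C[-1]\oplus\mathsf R$. An isomorphism of $\mathcal S$-complexes is a degree $0$ chain isomorphism commuting with the $\chi$'s. Duals: for a graded $R$-module $V$, $V^\dagger=\mathrm{Hom}_R(V,R)$, where a homogeneous $f:V_i\to R$ has degree $-i$; for a map $m:V\to W$, $m^\dagger:W^\dagger\to V^\dagger$ is $m^\dagger(f)=-\epsilon(f)\,f\circ m$. The dual $\mathcal S$-complex $\widetilde C^\dagger$ is $(\widetilde C^\dagger,\widetilde d^\dagger,\chi^\dagger)$, with decomposition $C^\dagger\oplus C^\dagger[-1]\oplus\mathsf R^\dagger$ and differential $\begin{pmatrix} d^\dagger&0&0\\ v^\dagger&-d^\dagger&\delta_1^\dagger\\ \delta_2^\dagger&0&r^\dagger\end{pmatrix}$. The suspension $\Sigma\widetilde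 C$ is $C_\Sigma\oplus C_\Sigma[-1]\oplus\mathsf R$, $C_\Sigma=C[-2]\oplus\mathsf R[-1]$, with differential, in the ordered summands $C[-2],\mathsf R[-1],C[-3],\mathsf R[-2],\mathsf R$, $\begin{pmatrix} d&-\delta_2&0&0&0\\ 0&-r&0&0&0\\ v&0&-d&\delta_2&v\delta_2\\ \delta_1&0&0&r&\delta_1\delta_2\\ 0&1&0&0&r\end{pmatrix}$. The negative suspension $\Sigma^{-1}\widetilde C$ is $C_{\Sigma^{-1}}\oplus C_{\Sigma^{-1}}[-1]\oplus\mathsf R$, $C_{\Sigma^{-1}}=C[2]\oplus\mathsf R[2]$, with differential, in the ordered summands $C[2],\mathsf R[2],C[1],\mathsf R[1],\mathsf R$, $\begin{pmatrix} d&0&0&0&0\\ \delta_1&r&0&0&0\\ v&\delta_2&-d&0&0\\ 0&0&-\delta_1&-r&1\\ \delta_1v&\delta_1\delta_2&0&0&r\end{pmatrix}$. For $n>0$, $\Sigma^n$ is the $n$-fold iterate of $\Sigma$, $\Sigma^{-n}$ the $n$-fold iterate of $\Sigma^{-1}$, and $\Sigma^0$ the identity. *)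

(* Concrete encoding of S-complexes over a commutative ring R:
   a finitely generated free graded R-module is given by a homogeneous basis,
   i.e. a rank n and a degree function 'I_n -> int; graded maps are matrices
   (column-vector convention: M i j = coefficient of the i-th target basis
   vector in the image of the j-th source basis vector). *)
From mathcomp Require Import all_boot all_order all_algebra.
Set Implicit Arguments. Unset Strict Implicit. Unset Printing Implicit Defensive.
Import Order.TTheory GRing.Theory Num.Theory.
Local Open Scope ring_scope.

Section SComplex.
Variable R : comPzRingType.

Definition eps (t : int) : R := (-1) ^+ `|t|%N.

Definition homog {m n : nat} (ds : 'I_m -> int) (dt : 'I_n -> int) (k : int)
  (M : 'M[R]_(n, m)) : Prop :=
  forall i j, M i j != 0 -> dt i = ds j + k.

(* dual of a map m : V -> W (W with degrees dt), m^dagger(f) = - eps(f) f o m,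
   written in the dual bases (the dual basis vector of a basis vector of degree t
   has degree -t). *)
Definition dualmx {n m : nat} (dt : 'I_n -> int) (M : 'M[R]_(n, m)) : 'M[R]_(m, n) :=
  \matrix_(j, i) (- eps (- dt i) * M i j).

(* graded module with a degree -1 endomorphism and a degree 1 endomorphism chi:
   the data (C~, d~, chi) of an S-complex, forgetting the decomposition *)
Record gcx := GCx { gn : nat; gdeg : 'I_gn -> int; gd : 'M[R]_gn; gchi : 'M[R]_gn }.

(* S-complex data: decomposition C~ = C (+) C[-1] (+) R with the five maps
   d : C -> C, v : C -> C[-1], delta1 : C -> R, delta2 : R -> C[-1], r : R -> R *)
Record Sdat := SDat {
  nC : nat; nR : nat;
  cdeg : 'I_nC -> int; rdeg : 'I_nR -> int;
  sd : 'M[R]_nC; sv : 'M[R]_nC;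
  sdel1 : 'M[R]_(nR, nC); sdel2 : 'M[R]_(nC, nR); sr : 'M[R]_nR }.

(* degrees of C~ = C (+) C[-1] (+) R ;  V[i]_j = V_(i+j), so a basis vector of
   degree t in C has degree t+1 in C[-1] *)
Definition tdeg (X : Sdat) (i : 'I_(nC X + nC X + nR X)) : int :=
  match split i with
  | inl j => match split j with inl a => cdeg a | inr b => cdeg b + 1 end
  | inr k => rdeg k
  end.

Definition dtot (X : Sdat) : 'M[R]_(nC X + nC X + nR X) :=
  block_mx (block_mx (sd X) 0 (sv X) (- sd X)) (col_mx 0 (sdel2 X))
           (row_mx (sdel1 X) 0) (sr X).

Definition chitot (X : Sdat) : 'M[R]_(nC X + nC X + nR X) :=
  block_mx (block_mx 0 0 1%:M 0) 0 0 0.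

Definition tot (X : Sdat) : gcx := GCx (@tdeg X) (dtot X) (chitot X).

Definition is_Scomplex (X : Sdat) : Prop :=
  homog (@tdeg X) (@tdeg X) (-1) (dtot X) /\ dtot X *m dtot X = 0.

Definition S_iso (A B : gcx) : Prop :=
  exists (P : 'M[R]_(gn B, gn A)) (Q : 'M[R]_(gn A, gn B)),
    [/\ P *m Q = 1%:M, Q *m P = 1%:M, homog (@gdeg A) (@gdeg B) 0 P,
        P *m gd A = gd B *m P & P *m gchi A = gchi B *m P].

Definition dualT (G : gcx) : gcx :=
  GCx (fun i => - gdeg i) (dualmx (@gdeg G) (gd G)) (dualmx (@gdeg G) (gchi G)).

(* the dual S-complex, with its decomposition C' (+) C'[-1] (+) R^dagger where
   C' = (C[-1])^dagger (written C^dagger in the paper), and C'[-1] is identified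
   with C^dagger through chi^dagger (matrix Emx below).  Its blocks are the blocks
   of d~^dagger transported along this identification. *)
Definition cs (X : Sdat) (j : 'I_(nC X)) : int := cdeg j + 1.

Definition Emx (X : Sdat) : 'M[R]_(nC X) :=
  diag_mx (\row_j (- eps (- cs j))).

Definition dualS (X : Sdat) : Sdat :=
  @SDat (nC X) (nR X) (fun j => - (cdeg j + 1)) (fun k => - rdeg k)
    (dualmx (@cs X) (- sd X))
    (Emx X *m dualmx (@cs X) (sv X))
    (dualmx (@cs X) (sdel2 X))
    (Emx X *m dualmx (@rdeg X) (sdel1 X))
    (dualmx (@rdeg X) (sr X)).

(* suspension: C_Sigma = C[-2] (+) R[-1] *)
Definition Sigma (X : Sdat) : Sdat :=
  @SDat (nC X + nR X) (nR X)
    (fun i => match split i with inl a => cdeg a + 2 | inr k => rdeg k + 1 end)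
    (@rdeg X)
    (block_mx (sd X) (- sdel2 X) 0 (- sr X))
    (block_mx (sv X) 0 (sdel1 X) 0)
    (row_mx 0 1%:M)
    (col_mx (sv X *m sdel2 X) (sdel1 X *m sdel2 X))
    (sr X).

(* negative suspension: C_Sigma^-1 = C[2] (+) R[2] *)
Definition SigmaInv (X : Sdat) : Sdat :=
  @SDat (nC X + nR X) (nR X)
    (fun i => match split i with inl a => cdeg a - 2 | inr k => rdeg k - 2 end)
    (@rdeg X)
    (block_mx (sd X) 0 (sdel1 X) (sr X))
    (block_mx (sv X) (sdel2 X) 0 0)
    (row_mx (sdel1 X *m sv X) (sdel1 X *m sdel2 X))
    (col_mx 0 1%:M)
    (sr X).

Definition SigmaZ (n : int) (X : Sdat) : Sdat :=
  match n with
  | Posz k => iter k Sigma X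
  | Negz k => iter k.+1 SigmaInv X
  end.

End SComplex.

(* Only the homogeneity of d~ matters.  It has odd degree, so d, delta1 and r
   anticommute with the sign matrices of C and R, while v and delta2, which land
   in C[-1], commute with them.  Hence every block of a dual is a signed
   transpose, and a blockwise computation shows that the dual of Sigma Y is
   Sigma^-1 (Y^dagger) on the nose, while the dual of Sigma^-1 Y is identified
   with Sigma (Y^dagger) by the sign of R on the summand R[2] of C_(Sigma^-1).
   Both suspensions preserve isomorphisms acting diagonally on C (+) C[-1] (+) R,
   so induction on |n| reduces the claim to n = 0, where the dual of the total
   complex is the total complex of the dual once the two copies of C are swapped. *)

From mathcomp Require Import all_boot all_order all_algebra.
From mathcomp Require Import zify.
Set Implicit Arguments. Unset Strict Implicit. Unset Printing Implicit Defensive.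
Import Order.TTheory GRing.Theory Num.Theory.
Local Open Scope ring_scope.

Lemma split_lshift m n (i : 'I_m) : split (lshift n i) = inl i.
Proof. exact: (unsplitK (inl _ i)). Qed.

Lemma split_rshift m n (i : 'I_n) : split (rshift m i) = inr i.
Proof. exact: (unsplitK (inr _ i)). Qed.

Section Signs.
Variable R : comPzRingType.

Lemma epsN (t : int) : eps R (- t) = eps R t.
Proof. by rewrite /eps abszN. Qed.

Lemma epsD1 (t : int) : eps R (t + 1) = - eps R t.
Proof.
rewrite /eps; case: t => [n|[|n]].
- by rewrite -PoszD absz_nat addn1 exprS mulN1r.
- by rewrite /= expr0 expr1 opprK.
have -> : Negz n.+1 + 1 = Negz n by rewrite !NegzE; lia.
by rewrite !NegzE !abszN !absz_nat [in RHS]exprS mulN1r opprK.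
Qed.

Lemma epsB1 (t : int) : eps R (t - 1) = - eps R t.
Proof. by rewrite -[in RHS](subrK 1 t) epsD1 opprK. Qed.

Lemma epsB2 (t : int) : eps R (t - 2) = eps R t.
Proof. by rewrite -[in RHS](subrK 2 t) -[2]/(1 + 1) addrA !epsD1 opprK. Qed.

Lemma eps_sqr (t : int) : eps R t * eps R t = 1.
Proof. by rewrite /eps -expr2 sqrr_sign. Qed.

Definition sgnmx n (f : 'I_n -> int) : 'M[R]_n := diag_mx (\row_i eps R (f i)).

Lemma sgnmxK n (f : 'I_n -> int) : sgnmx f *m sgnmx f = 1%:M.
Proof. by apply/matrixP => i j; rewrite mul_diag_mx !mxE mulrnAr eps_sqr. Qed.

Lemma tr_sgnmx n (f : 'I_n -> int) : (sgnmx f)^T = sgnmx f.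
Proof. exact: tr_diag_mx. Qed.

Lemma eq_sgnmx n (f g : 'I_n -> int) :
  (forall i, eps R (f i) = eps R (g i)) -> sgnmx f = sgnmx g.
Proof. by move=> fg; apply/matrixP => i j; rewrite !mxE fg. Qed.

Lemma sgnmxD1 n (f : 'I_n -> int) : sgnmx (fun i => f i + 1) = - sgnmx f.
Proof. by apply/matrixP => i j; rewrite !mxE epsD1 mulNrn. Qed.

Lemma sgnmx_split n1 n2 (f1 : 'I_n1 -> int) (f2 : 'I_n2 -> int) :
  sgnmx (fun i => match split i with inl a => f1 a | inr b => f2 b end)
  = block_mx (sgnmx f1) 0 0 (sgnmx f2).
Proof.
apply/matrixP => i j; rewrite -[i]splitK -[j]splitK.
case: (split i) => a; case: (split j) => b /=.
- by rewrite block_mxEul !mxE eq_lshift split_lshift.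
- by rewrite block_mxEur !mxE eq_lrshift.
- by rewrite block_mxEdl !mxE eq_rlshift.
- by rewrite block_mxEdr !mxE eq_rshift split_rshift.
Qed.

Lemma dualmxE n m (dt : 'I_n -> int) (M : 'M[R]_(n, m)) :
  dualmx dt M = - (M^T *m sgnmx dt).
Proof. by apply/matrixP => j i; rewrite mul_mx_diag !mxE epsN mulNr mulrC. Qed.

Lemma trmxN m n (A : 'M[R]_(m, n)) : (- A)^T = - A^T.
Proof. by apply/matrixP => i j; rewrite !mxE. Qed.

End Signs.

Section Homogeneous.
Variable R : comPzRingType.

Lemma eq_homog m n (ds ds' : 'I_m -> int) (dt dt' : 'I_n -> int) k (M : 'M[R]_(n, m)) :
  ds =1 ds' -> dt =1 dt' -> homog ds dt k M -> homog ds' dt' k M.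
Proof. by move=> Es Et hM i j /hM; rewrite Es Et. Qed.

Lemma homog0 m n (ds : 'I_m -> int) (dt : 'I_n -> int) k :
  homog ds dt k (0 : 'M[R]_(n, m)).
Proof. by move=> i j; rewrite mxE eqxx. Qed.

Lemma homog_diag n (ds dt : 'I_n -> int) k (v : 'rV[R]_n) :
  (forall i, dt i = ds i + k) -> homog ds dt k (diag_mx v).
Proof.
move=> E i j; rewrite mxE; have [->|ne] := eqVneq i j; first by rewrite E.
by rewrite mulr0n eqxx.
Qed.

Lemma homog_scalar n (ds dt : 'I_n -> int) k (a : R) :
  (forall i, dt i = ds i + k) -> homog ds dt k (a%:M : 'M[R]_n).
Proof. by move=> E; rewrite -diag_const_mx; apply: homog_diag. Qed.

Lemma homog_shift m n (ds : 'I_m -> int) (dt : 'I_n -> int) k c (M : 'M[R]_(n, m)) :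
  homog ds dt k M -> homog (fun j => ds j + c) (fun i => dt i + c) k M.
Proof. by move=> hM i j /hM ->; lia. Qed.

Lemma homog_block m1 m2 n1 n2 (ds1 : 'I_m1 -> int) (ds2 : 'I_m2 -> int)
    (dt1 : 'I_n1 -> int) (dt2 : 'I_n2 -> int) k (A : 'M[R]_(n1, m1))
    (B : 'M[R]_(n1, m2)) (C : 'M[R]_(n2, m1)) (D : 'M[R]_(n2, m2)) :
    homog ds1 dt1 k A -> homog ds2 dt1 k B -> homog ds1 dt2 k C -> homog ds2 dt2 k D ->
  homog (fun j => match split j with inl a => ds1 a | inr b => ds2 b end)
        (fun i => match split i with inl a => dt1 a | inr b => dt2 b end) k
        (block_mx A B C D).
Proof.
move=> hA hB hC hD i j; rewrite -[i]splitK -[j]splitK.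
case: (split i) => a; case: (split j) => b /=.
- by rewrite block_mxEul !split_lshift; apply: hA.
- by rewrite block_mxEur split_lshift split_rshift; apply: hB.
- by rewrite block_mxEdl split_lshift split_rshift; apply: hC.
- by rewrite block_mxEdr !split_rshift; apply: hD.
Qed.

Lemma homog_mul m p n (ds : 'I_m -> int) (dm : 'I_p -> int) (dt : 'I_n -> int)
    k1 k2 (M1 : 'M[R]_(p, m)) (M2 : 'M[R]_(n, p)) :
  homog ds dm k1 M1 -> homog dm dt k2 M2 -> homog ds dt (k1 + k2) (M2 *m M1).
Proof.
move=> h1 h2 i j; rewrite mxE; have [//|/eqP ne] := eqVneq (dt i) (ds j + (k1 + k2)).
rewrite big1 ?eqxx // => l _.
have [z2|/h2 e2] := eqVneq (M2 i l) 0; first by rewrite z2 mul0r.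
have [z1|/h1 e1] := eqVneq (M1 l j) 0; first by rewrite z1 mulr0.
by case: ne; rewrite e2 e1 addrA.
Qed.

Lemma homog_sgnmx m n (ds : 'I_m -> int) (dt : 'I_n -> int) k (s : R)
    (M : 'M[R]_(n, m)) :
    homog ds dt k M -> (forall j, eps R (ds j + k) = s * eps R (ds j)) ->
  sgnmx R dt *m M = s *: (M *m sgnmx R ds).
Proof.
move=> hM E; apply/matrixP => i j; rewrite mul_diag_mx mul_mx_diag !mxE.
have [->|/hM ->] := eqVneq (M i j) 0; first by rewrite !(mul0r, mulr0).
by rewrite E mulrCA mulrC.
Qed.

Lemma homog_odd_sgnmx m n (ds : 'I_m -> int) (dt : 'I_n -> int) (M : 'M[R]_(n, m)) :
  homog ds dt (-1) M -> sgnmx R dt *m M = - (M *m sgnmx R ds).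
Proof.
by move=> hM; rewrite (homog_sgnmx hM (s := -1)) ?scaleN1r // => j; rewrite epsB1 mulN1r.
Qed.

End Homogeneous.

Ltac block_simpl := rewrite ?(mulmx_block, mul_block_col, mul_row_block, mul_mx_row,
  mul_col_mx, mul_row_col, mul_col_row, mulmx0, mul0mx, addr0, add0r, mulmx1, mul1mx,
  col_mx0, row_mx0, opp_block_mx, opp_row_mx, opp_col_mx, mulmxN, mulNmx, oppr0, opprK,
  trmx0, trmx1, trmxN, tr_block_mx, tr_row_mx, tr_col_mx) //.

Section Parity.
Variable R : comPzRingType.
Implicit Types X : Sdat R.

Notation sgnC X := (sgnmx R (@cdeg R X)).
Notation sgnR X := (sgnmx R (@rdeg R X)).

Lemma sgnC_Sigma X : sgnC (Sigma X) = block_mx (sgnC X) 0 0 (- sgnR X).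
Proof.
rewrite /= sgnmx_split -sgnmxD1; congr block_mx.
by apply: eq_sgnmx => i; rewrite -epsB2 addrK.
Qed.

Lemma sgnC_SigmaInv X : sgnC (SigmaInv X) = block_mx (sgnC X) 0 0 (sgnR X).
Proof. by rewrite /= sgnmx_split; congr block_mx; apply: eq_sgnmx => i; apply: epsB2. Qed.

Definition sign_parity X : Prop :=
  [/\ sgnC X *m sd X = - (sd X *m sgnC X), sgnC X *m sv X = sv X *m sgnC X,
      sgnC X *m sdel2 X = sdel2 X *m sgnR X, sgnR X *m sdel1 X = - (sdel1 X *m sgnC X)
    & sgnR X *m sr X = - (sr X *m sgnR X)].

Lemma Scomplex_sign_parity X : is_Scomplex X -> sign_parity X.
Proof.
case=> hdtot _.
have block_homog m n (ds : 'I_m -> int) (dt : 'I_n -> int) (M : 'M[R]_(n, m)) f g :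
    (forall j, tdeg (f j) = ds j) -> (forall i, tdeg (g i) = dt i) ->
    (forall i j, dtot X (g i) (f j) = M i j) -> homog ds dt (-1) M.
  by move=> Ef Eg EM i j; rewrite -EM -Ef -Eg; apply: hdtot.
pose cC (a : 'I_(nC X)) := lshift (nR X) (lshift (nC X) a).
pose cC1 (a : 'I_(nC X)) := lshift (nR X) (rshift (nC X) a).
pose cR (k : 'I_(nR X)) := rshift (nC X + nC X) k.
have tdeg_cC (a : 'I_(nC X)) : tdeg (cC a) = cdeg a by rewrite /tdeg !split_lshift.
have tdeg_cC1 (a : 'I_(nC X)) : tdeg (cC1 a) = cdeg a + 1.
  by rewrite /tdeg split_lshift split_rshift.
have tdeg_cR (k : 'I_(nR X)) : tdeg (cR k) = rdeg k by rewrite /tdeg split_rshift.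
have sgnC1 : sgnmx R (fun a => cdeg a + 1) = - sgnC X by rewrite sgnmxD1.
split.
- apply: homog_odd_sgnmx; apply: (block_homog _ _ _ _ _ cC cC) => // i j.
  by rewrite /dtot !block_mxEul.
- apply: oppr_inj; rewrite -mulNmx -sgnC1.
  apply: homog_odd_sgnmx; apply: (block_homog _ _ _ _ _ cC cC1) => // i j.
  by rewrite /dtot !block_mxEul block_mxEdl.
- apply: oppr_inj; rewrite -mulNmx -sgnC1.
  apply: homog_odd_sgnmx; apply: (block_homog _ _ _ _ _ cR cC1) => // i j.
  by rewrite /dtot block_mxEur col_mxEd.
- apply: homog_odd_sgnmx; apply: (block_homog _ _ _ _ _ cC cR) => // i j.
  by rewrite /dtot block_mxEdl row_mxEl.
- apply: homog_odd_sgnmx; apply: (block_homog _ _ _ _ _ cR cR) => // i j.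
  by rewrite /dtot block_mxEdr.
Qed.

Lemma sign_parity_Sigma X : sign_parity X -> sign_parity (Sigma X).
Proof.
case=> Pd Pv P2 P1 Pr; rewrite /sign_parity sgnC_Sigma /=; split; block_simpl.
- by rewrite Pd P2 Pr.
- by rewrite Pv P1 opprK.
- by rewrite !mulmxA Pv P1 mulNmx opprK -!mulmxA P2.
Qed.

Lemma sign_parity_SigmaInv X : sign_parity X -> sign_parity (SigmaInv X).
Proof.
case=> Pd Pv P2 P1 Pr; rewrite /sign_parity sgnC_SigmaInv /=; split; block_simpl.
- by rewrite Pd P1 Pr.
- by rewrite Pv P2.
- by rewrite !mulmxA P1 !mulNmx -!mulmxA Pv P2 !mulmxA.
Qed.

Lemma sign_parity_iter_SigmaInv X k :
  sign_parity X -> sign_parity (iter k (@SigmaInv R) X).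
Proof. by move=> PX; elim: k => //= k; apply: sign_parity_SigmaInv. Qed.

Lemma sign_parity_iter_Sigma X k : sign_parity X -> sign_parity (iter k (@Sigma R) X).
Proof. by move=> PX; elim: k => //= k; apply: sign_parity_Sigma. Qed.

End Parity.

Section DecomposedIso.
Variable R : comPzRingType.
Implicit Types X Y Z : Sdat R.

(* An isomorphism respecting the decomposition: [A] on both copies of [C], [B] on [R]. *)
Inductive Sdat_iso X Y : Prop :=
  SdatIso (A : 'M[R]_(nC Y, nC X)) (A' : 'M[R]_(nC X, nC Y))
          (B : 'M[R]_(nR Y, nR X)) (B' : 'M[R]_(nR X, nR Y)) of
    A *m A' = 1%:M & A' *m A = 1%:M & B *m B' = 1%:M & B' *m B = 1%:M &
    homog (@cdeg R X) (@cdeg R Y) 0 A & homog (@rdeg R X) (@rdeg R Y) 0 B &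
    A *m sd X = sd Y *m A & A *m sv X = sv Y *m A &
    B *m sdel1 X = sdel1 Y *m A & A *m sdel2 X = sdel2 Y *m B &
    B *m sr X = sr Y *m B.

Lemma Sdat_iso_refl X : Sdat_iso X X.
Proof.
apply: (@SdatIso X X 1%:M 1%:M 1%:M 1%:M); rewrite ?mulmx1 ?mul1mx //;
  by apply: homog_scalar => i; rewrite addr0.
Qed.

Lemma Sdat_iso_trans X Y Z : Sdat_iso X Y -> Sdat_iso Y Z -> Sdat_iso X Z.
Proof.
case=> A A' B B' AA' A'A BB' B'B hA hB Ed Ev E1 E2 Er.
case=> C C' D D' CC' C'C DD' D'D hC hD Fd Fv F1 F2 Fr.
apply: (@SdatIso X Z (C *m A) (A' *m C') (D *m B) (B' *m D')).
- by rewrite mulmxA -(mulmxA C) AA' mulmx1 CC'.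
- by rewrite mulmxA -(mulmxA A') C'C mulmx1 A'A.
- by rewrite mulmxA -(mulmxA D) BB' mulmx1 DD'.
- by rewrite mulmxA -(mulmxA B') D'D mulmx1 B'B.
- by rewrite -[0]addr0; apply: homog_mul hA hC.
- by rewrite -[0]addr0; apply: homog_mul hB hD.
- by rewrite -mulmxA Ed !mulmxA Fd.
- by rewrite -mulmxA Ev !mulmxA Fv.
- by rewrite -mulmxA E1 !mulmxA F1.
- by rewrite -mulmxA E2 !mulmxA F2.
- by rewrite -mulmxA Er !mulmxA Fr.
Qed.

Lemma Sdat_iso_tot X Y : Sdat_iso X Y -> S_iso (tot X) (tot Y).
Proof.
case=> A A' B B' AA' A'A BB' B'B hA hB Ed Ev E1 E2 Er.
exists (block_mx (block_mx A 0 0 A) 0 0 B), (block_mx (block_mx A' 0 0 A') 0 0 B').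
split.
- by block_simpl; rewrite AA' BB' -!scalar_mx_block.
- by block_simpl; rewrite A'A B'B -!scalar_mx_block.
- apply: homog_block; [|exact: homog0 | exact: homog0 | exact: hB].
  by apply: homog_block; [exact: hA | exact: homog0 | exact: homog0 | exact: homog_shift].
- by rewrite /= /dtot; block_simpl; rewrite Ed Ev E1 E2 Er.
- by rewrite /= /chitot; block_simpl.
Qed.

Lemma Sdat_iso_Sigma X Y : Sdat_iso X Y -> Sdat_iso (Sigma X) (Sigma Y).
Proof.
case=> A A' B B' AA' A'A BB' B'B hA hB Ed Ev E1 E2 Er.
apply: (@SdatIso (Sigma X) (Sigma Y) (block_mx A 0 0 B) (block_mx A' 0 0 B') B B');
  rewrite /=; block_simpl.
- by rewrite AA' BB' -scalar_mx_block.
- by rewrite A'A B'B -scalar_mx_block.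
- by apply: homog_block;
    [exact: homog_shift | exact: homog0 | exact: homog0 | exact: homog_shift].
- by rewrite Ed E2 Er.
- by rewrite Ev E1.
- by rewrite !mulmxA Ev E1 -!mulmxA E2.
Qed.

Lemma Sdat_iso_SigmaInv X Y : Sdat_iso X Y -> Sdat_iso (SigmaInv X) (SigmaInv Y).
Proof.
case=> A A' B B' AA' A'A BB' B'B hA hB Ed Ev E1 E2 Er.
apply: (@SdatIso (SigmaInv X) (SigmaInv Y) (block_mx A 0 0 B) (block_mx A' 0 0 B') B B');
  rewrite /=; block_simpl.
- by rewrite AA' BB' -scalar_mx_block.
- by rewrite A'A B'B -scalar_mx_block.
- by apply: homog_block;
    [exact: homog_shift | exact: homog0 | exact: homog0 | exact: homog_shift].
- by rewrite Ed E1 Er.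
- by rewrite Ev E2.
- by rewrite !mulmxA E1 -!mulmxA Ev E2.
Qed.

End DecomposedIso.

Section Dual.
Variable R : comPzRingType.
Implicit Types Y : Sdat R.

Notation sgnC X := (sgnmx R (@cdeg R X)).
Notation sgnR X := (sgnmx R (@rdeg R X)).

Section DualBlocks.
Variable X : Sdat R.

Lemma Emx_sgnC : Emx X = sgnC X.
Proof. by apply/matrixP => i j; rewrite !mxE /cs epsN epsD1 opprK. Qed.

Lemma sd_dualS : sd (dualS X) = - ((sd X)^T *m sgnC X).
Proof. by rewrite /= dualmxE /cs sgnmxD1 trmxN !(mulmxN, mulNmx, opprK). Qed.

Lemma sv_dualS : sv (dualS X) = sgnC X *m ((sv X)^T *m sgnC X).
Proof. by rewrite /= Emx_sgnC dualmxE /cs sgnmxD1 !(mulmxN, mulNmx, opprK). Qed.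

Lemma sdel1_dualS : sdel1 (dualS X) = (sdel2 X)^T *m sgnC X.
Proof. by rewrite /= dualmxE /cs sgnmxD1 !(mulmxN, mulNmx, opprK). Qed.

Lemma sdel2_dualS : sdel2 (dualS X) = - (sgnC X *m ((sdel1 X)^T *m sgnR X)).
Proof. by rewrite /= Emx_sgnC dualmxE mulmxN. Qed.

Lemma sr_dualS : sr (dualS X) = - ((sr X)^T *m sgnR X).
Proof. by rewrite /= dualmxE. Qed.

End DualBlocks.

Ltac dual_simpl :=
  rewrite ?(sd_dualS, sv_dualS, sdel1_dualS, sdel2_dualS, sr_dualS);
  rewrite ?(sgnC_Sigma, sgnC_SigmaInv) /Sigma /SigmaInv;
  rewrite ?(sd_dualS, sv_dualS, sdel1_dualS, sdel2_dualS, sr_dualS) /=;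
  block_simpl.

Lemma dualS_Sigma Y : Sdat_iso (dualS (Sigma Y)) (SigmaInv (dualS Y)).
Proof.
apply: (@SdatIso _ (dualS (Sigma Y)) (SigmaInv (dualS Y)) 1%:M 1%:M 1%:M 1%:M);
  rewrite ?mulmx1 ?mul1mx //.
- by apply: homog_scalar => i /=; case: (split i) => a; lia.
- by apply: homog_scalar => i /=; lia.
all: dual_simpl.
- by rewrite [RHS]block_mxEv row_mx0.
- by rewrite !trmx_mul !mulmxA -!(mulmxA _ (sgnC Y) (sgnC Y)) !sgnmxK !mulmx1.
- by rewrite sgnmxK.
Qed.

Lemma dualS_SigmaInv Y : sign_parity Y -> Sdat_iso (dualS (SigmaInv Y)) (Sigma (dualS Y)).
Proof.
case=> _ _ _ P1 Pr.
have P1t := congr1 trmx P1; rewrite trmxN !trmx_mul !tr_sgnmx in P1t.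
have Prt := congr1 trmx Pr; rewrite trmxN !trmx_mul !tr_sgnmx in Prt.
pose T : 'M[R]_(nC Y + nR Y) := block_mx 1%:M 0 0 (sgnR Y).
have TT : T *m T = 1%:M.
  by rewrite mulmx_block; block_simpl; rewrite sgnmxK -scalar_mx_block.
apply: (@SdatIso _ (dualS (SigmaInv Y)) (Sigma (dualS Y)) T T 1%:M 1%:M);
  rewrite ?mulmx1 ?mul1mx // /T.
- apply: (eq_homog
    (ds := fun j => match split j with
                    | inl a => - (@cdeg R Y a - 2 + 1) | inr b => - (@rdeg R Y b - 2 + 1) end)
    (dt := fun i => match split i with
                    | inl a => - (@cdeg R Y a + 1) + 2 | inr b => - @rdeg R Y b + 1 end)).
  + by move=> j /=; case: (split j).
  + by [].
  apply: homog_block; [apply: homog_scalar => a; lia | exact: homog0 | exact: homog0 |].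
  by apply: homog_diag => a; lia.
- by apply: homog_scalar => i /=; lia.
all: dual_simpl.
- rewrite [RHS]block_mxEv -!mulmxA sgnmxK mulmx1 P1t Prt !mulmxN !opprK.
  by rewrite mulmx1 mulmxA sgnmxK mul1mx.
- by rewrite [RHS]block_mxEv (mulmxA (sgnR Y) (sgnR Y)) sgnmxK mul1mx.
- rewrite !trmx_mul !mulmxA ?sgnmxK ?mul1mx.
  by rewrite -?(mulmxA _ (sgnmx _ _) (sgnmx _ _)) ?sgnmxK ?mulmx1.
Qed.

End Dual.

Section Totalization.
Variable R : comPzRingType.
Implicit Types X : Sdat R.

Notation sgnC X := (sgnmx R (@cdeg R X)).

Lemma S_iso_trans (A B C : gcx R) : S_iso A B -> S_iso B C -> S_iso A C.
Proof.
case=> P [Q] [PQ QP hP Pd Pc]; case=> P' [Q'] [PQ' QP' hP' Pd' Pc'].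
exists (P' *m P), (Q *m Q'); split.
- by rewrite mulmxA -(mulmxA P') PQ mulmx1 PQ'.
- by rewrite mulmxA -(mulmxA Q) QP' mulmx1 QP.
- by rewrite -[0]addr0; apply: homog_mul hP hP'.
- by rewrite -mulmxA Pd !mulmxA Pd'.
- by rewrite -mulmxA Pc !mulmxA Pc'.
Qed.

Lemma sgnmx_tdeg X : sgnmx R (@tdeg R X) =
  block_mx (block_mx (sgnC X) 0 0 (- sgnC X)) 0 0 (sgnmx R (@rdeg R X)).
Proof. by rewrite /tdeg !sgnmx_split sgnmxD1. Qed.

(* [dualS] takes [(C[-1])^dagger] as its first summand: the two copies of [C]
   are swapped, the one coming from [C] being identified through [chi^dagger]. *)
Lemma dualT_tot X : sgnC X *m sd X = - (sd X *m sgnC X) ->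
  S_iso (dualT (tot X)) (tot (dualS X)).
Proof.
move=> Pd; have Pdt := congr1 trmx Pd; rewrite trmxN !trmx_mul !tr_sgnmx in Pdt.
exists (block_mx (block_mx 0 1%:M (sgnC X) 0) 0 0 1%:M).
exists (block_mx (block_mx 0 (sgnC X) 1%:M 0) 0 0 1%:M).
split.
- by block_simpl; rewrite sgnmxK -scalar_mx_block -scalar_mx_block.
- by block_simpl; rewrite sgnmxK -scalar_mx_block -scalar_mx_block.
- apply: (eq_homog (ds := fun i => match split i with
      | inl j => match split j with inl a => - @cdeg R X a | inr b => - (@cdeg R X b + 1) end
      | inr k => - @rdeg R X k end) (dt := @tdeg R (dualS X))).
  + by move=> j; rewrite /= /tdeg; case: (split j) => // j'; case: (split j').
  + by [].
  apply: homog_block; [|exact: homog0|exact: homog0|apply: homog_scalar => a /=; lia].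
  apply: homog_block; [exact: homog0| apply: homog_scalar => a /=; lia
    | apply: homog_diag => a /=; lia | exact: homog0].
- rewrite /= dualmxE sgnmx_tdeg /dtot sd_dualS sv_dualS sdel1_dualS sdel2_dualS sr_dualS.
  block_simpl; rewrite !block_mxEv -(mulmxA (sd X)^T) sgnmxK mulmx1 Pdt.
  by rewrite !mulmxN !opprK (mulmxA (sgnC X) (sgnC X)) sgnmxK mul1mx.
- by rewrite /= dualmxE sgnmx_tdeg /chitot; block_simpl; rewrite sgnmxK !block_mxEv !row_mx0.
Qed.

Lemma dualS_iter_Sigma X k :
  Sdat_iso (dualS (iter k (@Sigma R) X)) (iter k (@SigmaInv R) (dualS X)).
Proof.
elim: k => [|k IH]; first exact: Sdat_iso_refl.
exact: Sdat_iso_trans (dualS_Sigma _) (Sdat_iso_SigmaInv IH).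
Qed.

Lemma dualS_iter_SigmaInv X k : sign_parity X ->
  Sdat_iso (dualS (iter k (@SigmaInv R) X)) (iter k (@Sigma R) (dualS X)).
Proof.
move=> PX; elim: k => [|k IH]; first exact: Sdat_iso_refl.
exact: Sdat_iso_trans (dualS_SigmaInv (sign_parity_iter_SigmaInv k PX)) (Sdat_iso_Sigma IH).
Qed.

Lemma dualT_tot_iter_Sigma X k : sign_parity X ->
  S_iso (dualT (tot (iter k (@Sigma R) X))) (tot (iter k (@SigmaInv R) (dualS X))).
Proof.
move=> /(sign_parity_iter_Sigma k) [Pd _ _ _ _].
exact: S_iso_trans (dualT_tot Pd) (Sdat_iso_tot (dualS_iter_Sigma X k)).
Qed.

Lemma dualT_tot_iter_SigmaInv X k : sign_parity X ->
  S_iso (dualT (tot (iter k (@SigmaInv R) X))) (tot (iter k (@Sigma R) (dualS X))).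
Proof.
move=> PX; have [Pd _ _ _ _] := sign_parity_iter_SigmaInv k PX.
exact: S_iso_trans (dualT_tot Pd) (Sdat_iso_tot (dualS_iter_SigmaInv k PX)).
Qed.

End Totalization.

Unset Implicit Arguments.

Theorem proposition2p9 (R : comPzRingType) (X : Sdat R) (n : int) :
  is_Scomplex X ->
  S_iso (dualT (tot (SigmaZ n X))) (tot (SigmaZ (- n) (dualS X))).
Proof.
move=> /Scomplex_sign_parity PX; case: n => k.
- have -> : SigmaZ (- Posz k) (dualS X) = iter k (@SigmaInv R) (dualS X) by case: k.
  exact: dualT_tot_iter_Sigma.
- exact: dualT_tot_iter_SigmaInv.
Qed.
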